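(* Let $M\subset\mathbb{R}^2$ be open with coordinates $(x,u)$, let $M^{(1)}$ be the first-order jet space with coordinates $(x,u,u_x)$, and consider the ODE $u_{xx}=\phi(x,u,u_x)$ with associated vector field $\mathbf{A}=\partial_x+u_x\partial_u+\phi\,\partial_{u_x}$. Let $(\partial_u,\lambda_1)$ and $(\partial_u,\lambda_2)$ be the canonical representatives of two non-equivalent generalized $\mathcal{C}^\infty$-symmetries of this ODE, with $\mathbf{A}$-equivalence classes $\mathcal{A}_1,\mathcal{A}_2$. Let $\mathbf{X}_i=\partial_u+\lambda_i\partial_{u_x}$, $\rho=\dfrac{\mathbf{X}_1(\lambda_2)-\mathbf{X}_2(\lambda_1)}{\lambda_1-\lambda_2}$, let $f_1,f_2\in C^\infty(M^{(1)})$ satisfy $\dfrac{\mathbf{X}_1(f_2)}{f_2}=\dfrac{\mathbf{X}_2(f_1)}{f_1}=\rho$, let $\mathbf{Y}_i=f_i\mathbf{X}_i$ and $\rho_i=\lambda_i-\mathbf{A}(f_i)/f_i$ ($i=1,2$), and assume $g_1,g_2\in C^\infty(M^{(1)})$ satisfy $\mathbf{A}(g_1)=\rho_1g_1$, $\mathbf{Y}_2(g_1)=0$, $\mathbf{A}(g_2)=\rho_2g_2$, $\mathbf{Y}_1(g_2)=0$. Let $h_i=f_ig_i$ and $\mathbf{Z}_i=h_i\partial_u+\mathbf{A}(h_i)\partial_{u_x}$ ($i=1,2$). Then: (1) $(h_1\partial_u,0)\in\mathcal{A}_1$ and $(h_2\partial_u,0)\in\mathcal{A}_2$; (2) $\mathbf{Z}_1$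 and $\mathbf{Z}_2$ are generalized symmetries of the ODE; (3) $[\mathbf{Z}_1,\mathbf{A}]=[\mathbf{Z}_2,\mathbf{A}]=[\mathbf{Z}_1,\mathbf{Z}_2]=0$.
   Context: All functions are smooth on $M^{(1)}$ and all statements are local, on an open set where $\lambda_1-\lambda_2$, $f_1,f_2,g_1,g_2$ do not vanish. For smooth $\xi,\eta,\lambda$ on $M^{(1)}$ and $\mathbf{v}=\xi\partial_x+\eta\partial_u$, the $\lambda$-prolongation is $\mathbf{v}^{[\lambda,(1)]}=\mathbf{v}+\big((\mathbf{A}+\lambda)(\eta)-(\mathbf{A}+\lambda)(\xi)u_x\big)\partial_{u_x}$. The pair $(\mathbf{v},\lambda)$ is a generalized $\mathcal{C}^\infty$-symmetry of the ODE if $[\mathbf{v}^{[\lambda,(1)]},\mathbf{A}]=\lambda\,\mathbf{v}^{[\lambda,(1)]}-(\mathbf{A}+\lambda)(\xi)\,\mathbf{A}$. When $(\mathbf{v},0)$ is a generalized $\mathcal{C}^\infty$-symmetry, the vector field $\mathbf{v}^{[0,(1)]}$ is called a generalized symmetry of the ODE. Two generalized $\mathcal{C}^\infty$-symmetries $(\mathbf{v}_1,\lambda_1)$, $(\mathbf{v}_2,\lambda_2)$ are $\mathbf{A}$-equivalent if $\{\mathbf{A},\mathbf{v}_1^{[\lambda_1,(1)]},\mathbf{v}_2^{[\lambda_2,(1)]}\}$ is linearly dependent over $C^\infty(M^{(1)})$; equivalence classes are $\mathbf{A}$-equivalence classes. If $Q=\eta-\xi u_x$, the canonical representative of the class of $(\mathbf{v},\lambda)$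 is $(\partial_u,\lambda+\mathbf{A}(Q)/Q)$. *)

From Stdlib Require Import Reals.
From Coquelicot Require Import Coquelicot.
Open Scope R_scope.

(* Smooth functions on (an open subset of) the jet space M^(1) with
   coordinates (x, u, p), p standing for u_x. *)
Definition fn := R -> R -> R -> R.
Definition pt := (R * R * R)%type.
Definition unc (F : fn) : pt -> R :=
  fun q => F (fst (fst q)) (snd (fst q)) (snd q).

Definition cst (c : R) : fn := fun _ _ _ => c.
Definition fadd (F G : fn) : fn := fun x u p => F x u p + G x u p.
Definition fsub (F G : fn) : fn := fun x u p => F x u p - G x u p.
Definition fmul (F G : fn) : fn := fun x u p => F x u p * G x u p.
Definition fdiv (F G : fn) : fn := fun x u p => F x u p / G x u p.
Definition coord_p : fn := fun _ _ p => p.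

Definition dx (F : fn) : fn := fun x u p => Derive (fun t => F t u p) x.
Definition du (F : fn) : fn := fun x u p => Derive (fun t => F x t p) u.
Definition dp (F : fn) : fn := fun x u p => Derive (fun t => F x u t) p.

Inductive dir := Dx | Du | Dp.
Definition dpart (d : dir) : fn -> fn :=
  match d with Dx => dx | Du => du | Dp => dp end.
Definition slice_derivable (d : dir) (F : fn) (x u p : R) : Prop :=
  match d with
  | Dx => ex_derive (fun t => F t u p) x
  | Du => ex_derive (fun t => F x t p) u
  | Dp => ex_derive (fun t => F x u t) p
  end.
Fixpoint iter_part (l : list dir) (F : fn) : fn :=
  match l with nil => F | cons d l' => dpart d (iter_part l' F) end.

Definition smooth_on (U : pt -> Prop) (F : fn) : Prop :=
  forall (l : list dir) (x u p : R), U (x, u, p) ->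
    continuous (unc (iter_part l F)) (x, u, p) /\
    forall d, slice_derivable d (iter_part l F) x u p.

(* Vector fields  cx d_x + cu d_u + cp d_{u_x}  on M^(1). *)
Record VF := mkVF { cx : fn; cu : fn; cp : fn }.

Definition app (V : VF) (F : fn) : fn := fun x u p =>
  cx V x u p * dx F x u p + cu V x u p * du F x u p + cp V x u p * dp F x u p.

Definition bracket (V W : VF) : VF :=
  mkVF (fsub (app V (cx W)) (app W (cx V)))
       (fsub (app V (cu W)) (app W (cu V)))
       (fsub (app V (cp W)) (app W (cp V))).

Definition vscale (a : fn) (V : VF) : VF :=
  mkVF (fmul a (cx V)) (fmul a (cu V)) (fmul a (cp V)).
Definition vadd (V W : VF) : VF :=
  mkVF (fadd (cx V) (cx W)) (fadd (cu V) (cu W)) (fadd (cp V) (cp W)).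
Definition vsub (V W : VF) : VF :=
  mkVF (fsub (cx V) (cx W)) (fsub (cu V) (cu W)) (fsub (cp V) (cp W)).

Definition vf_eq_on (U : pt -> Prop) (V W : VF) : Prop :=
  forall x u p, U (x, u, p) ->
    cx V x u p = cx W x u p /\ cu V x u p = cu W x u p /\
    cp V x u p = cp W x u p.

Definition Avf (phi : fn) : VF := mkVF (cst 1) coord_p phi.

Definition Apl (phi lam F : fn) : fn := fadd (app (Avf phi) F) (fmul lam F).

Definition prolong (phi xi eta lam : fn) : VF :=
  mkVF xi eta (fsub (Apl phi lam eta) (fmul (Apl phi lam xi) coord_p)).

Definition gen_Cinf_sym (U : pt -> Prop) (phi xi eta lam : fn) : Prop :=
  smooth_on U xi /\ smooth_on U eta /\ smooth_on U lam /\
  vf_eq_on U (bracket (prolong phi xi eta lam) (Avf phi))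
             (vsub (vscale lam (prolong phi xi eta lam))
                   (vscale (Apl phi lam xi) (Avf phi))).

Definition gen_symmetry (U : pt -> Prop) (phi : fn) (Z : VF) : Prop :=
  exists xi eta, gen_Cinf_sym U phi xi eta (cst 0) /\
                 vf_eq_on U Z (prolong phi xi eta (cst 0)).

Definition lin_dep_on (U : pt -> Prop) (V1 V2 V3 : VF) : Prop :=
  exists a b c : fn, smooth_on U a /\ smooth_on U b /\ smooth_on U c /\
    ~ (forall x u p, U (x, u, p) ->
          a x u p = 0 /\ b x u p = 0 /\ c x u p = 0) /\
    vf_eq_on U (vadd (vadd (vscale a V1) (vscale b V2)) (vscale c V3))
               (mkVF (cst 0) (cst 0) (cst 0)).

Definition A_equiv (U : pt -> Prop) (phi xi1 eta1 lam1 xi2 eta2 lam2 : fn)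
  : Prop :=
  lin_dep_on U (Avf phi) (prolong phi xi1 eta1 lam1) (prolong phi xi2 eta2 lam2).

Definition in_class (U : pt -> Prop) (phi xi eta lam xi0 eta0 lam0 : fn)
  : Prop :=
  gen_Cinf_sym U phi xi eta lam /\ A_equiv U phi xi eta lam xi0 eta0 lam0.

Definition Xvf (lam : fn) : VF := mkVF (cst 0) (cst 1) lam.

(* Partial derivatives are local on the open set [U], so smooth functions form
   a ring and vector fields act on them as derivations.  For a generalized
   C^oo-symmetry (d_u, l) the bracket condition reduces to the Riccati-type
   identity [A(l) + l^2 = phi_u + l phi_{u_x}].  The choice of [g_i] is a gauge
   that makes [h_i = f_i g_i] satisfy [A(h_i) = l_i h_i]; hence the
   0-prolongation [Z_i] of [h_i d_u] equals [h_i X_i] on [U], which is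
   A-equivalent to [X_i], and [[Z_i, A] = h_i (phi_u + l_i phi_{u_x} - A(l_i)
   - l_i^2) d_{u_x} = 0].  Finally [[Z_1, Z_2] = 0] because
   [X_1(h_2) = rho h_2], [X_2(h_1) = rho h_1] and
   [[X_1, X_2] = rho (l_1 - l_2) d_{u_x}]. *)

From Pilot Require Import Defs.
From Stdlib Require Import Reals Lra FunctionalExtensionality.
From Stdlib Require List.
From Coquelicot Require Import Coquelicot.
Import List.ListNotations.
Open Scope list_scope.
Open Scope R_scope.

Definition slice (d : dir) (F : fn) (x u p : R) : R -> R :=
  match d with
  | Defs.Dx => fun t => F t u p
  | Defs.Du => fun t => F x t p
  | Defs.Dp => fun t => F x u t
  end.

Definition slice_point (d : dir) (x u p : R) : R :=
  match d with Defs.Dx => x | Defs.Du => u | Defs.Dp => p end.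

Definition slice_embed (d : dir) (x u p t : R) : pt :=
  match d with Defs.Dx => (t, u, p) | Defs.Du => (x, t, p) | Defs.Dp => (x, u, t) end.

Lemma dpart_slice d F x u p :
  dpart d F x u p = Derive (slice d F x u p) (slice_point d x u p).
Proof. now destruct d. Qed.

Lemma slice_at_point d F x u p : slice d F x u p (slice_point d x u p) = F x u p.
Proof. now destruct d. Qed.

Lemma slice_derivableE d F x u p :
  slice_derivable d F x u p <-> ex_derive (slice d F x u p) (slice_point d x u p).
Proof. now destruct d. Qed.

Lemma locally_slice_open (U : pt -> Prop) d x u p :
  open U -> U (x, u, p) ->
  locally (slice_point d x u p) (fun t => U (slice_embed d x u p t)).
Proof.
  intros oU Uq. destruct (oU _ Uq) as [e He]. exists e. intros t Ht. apply He.
  destruct d; simpl in *; repeat split; try apply ball_center; exact Ht.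
Qed.

Section Locality.
Variables (U : pt -> Prop) (F G : fn).
Hypotheses (oU : open U) (eqFG : forall x u p, U (x, u, p) -> F x u p = G x u p).

Lemma slice_ext_on d x u p : U (x, u, p) ->
  locally (slice_point d x u p) (fun t => slice d F x u p t = slice d G x u p t).
Proof.
  intros Uq. refine (filter_imp _ _ _ (locally_slice_open U d x u p oU Uq)).
  intros t Ut. destruct d; apply eqFG; exact Ut.
Qed.

Lemma dpart_ext_on d x u p : U (x, u, p) -> dpart d F x u p = dpart d G x u p.
Proof.
  intros Uq. rewrite !dpart_slice. apply Derive_ext_loc, slice_ext_on, Uq.
Qed.

Lemma slice_derivable_ext_on d x u p : U (x, u, p) ->
  slice_derivable d F x u p -> slice_derivable d G x u p.
Proof.
  intros Uq. rewrite !slice_derivableE. apply ex_derive_ext_loc, slice_ext_on, Uq.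
Qed.

End Locality.

Lemma smooth_on_cst (U : pt -> Prop) c : smooth_on U (cst c).
Proof.
  intros l x u p _.
  assert (Hk : exists k, iter_part l (cst c) = cst k).
  { induction l as [|d l [k IH]]; [now exists c|].
    exists 0. simpl. rewrite IH.
    do 3 (apply functional_extensionality; intro).
    rewrite dpart_slice. destruct d; exact (Derive_const k _). }
  destruct Hk as [k ->]. split; [apply continuous_const|].
  intros d. apply slice_derivableE. destruct d; apply ex_derive_const.
Qed.

(* A Leibniz sum [sum_(a, b) (d^a F) (d^b G)]: by the product rule every
   iterated partial derivative of [F * G] is of this form. *)
Fixpoint leibniz_sum (F G : fn) (L : list (list dir * list dir)) : fn :=
  match L with
  | [] => cst 0
  | (a, b) :: L' => fun x u p =>
      iter_part a F x u p * iter_part b G x u p + leibniz_sum F G L' x u p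
  end.

Definition leibniz_step (d : dir) (L : list (list dir * list dir)) :=
  List.flat_map (fun ab => [(d :: fst ab, snd ab); (fst ab, d :: snd ab)]) L.

Section Leibniz.
Variables (U : pt -> Prop) (F G : fn).
Hypotheses (sF : smooth_on U F) (sG : smooth_on U G).

Lemma leibniz_sum_derive d x u p L : U (x, u, p) ->
  ex_derive (slice d (leibniz_sum F G L) x u p) (slice_point d x u p) /\
  Derive (slice d (leibniz_sum F G L) x u p) (slice_point d x u p)
  = leibniz_sum F G (leibniz_step d L) x u p.
Proof.
  intros Uq. induction L as [|[a b] L [IHex IHeq]].
  { replace (slice d (leibniz_sum F G []) x u p) with (fun _ : R => 0)
      by now destruct d.
    split; [apply ex_derive_const | apply Derive_const]. }
  replace (slice d (leibniz_sum F G ((a, b) :: L)) x u p) with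
    (fun t => slice d (iter_part a F) x u p t * slice d (iter_part b G) x u p t
              + slice d (leibniz_sum F G L) x u p t) by now destruct d.
  assert (Da := proj1 (slice_derivableE _ _ _ _ _) (proj2 (sF a x u p Uq) d)).
  assert (Db := proj1 (slice_derivableE _ _ _ _ _) (proj2 (sG b x u p Uq) d)).
  split.
  - apply (ex_derive_plus (fun t => _ * _)); [apply ex_derive_mult|]; assumption.
  - rewrite (Derive_plus (fun t => _ * _)), Derive_mult, IHeq;
      [|assumption..|apply ex_derive_mult; assumption|assumption].
    rewrite <- !dpart_slice.
    change (leibniz_step d ((a, b) :: L))
      with ((d :: a, b) :: (a, d :: b) :: leibniz_step d L).
    rewrite !slice_at_point. simpl. ring.
Qed.

Lemma iter_part_fmul_leibniz : open U -> forall l, exists L,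
  forall x u p, U (x, u, p) -> iter_part l (fmul F G) x u p = leibniz_sum F G L x u p.
Proof.
  intros oU l. induction l as [|d l [L HL]].
  - exists [([], [])]. intros x u p _. simpl. unfold fmul, cst. ring.
  - exists (leibniz_step d L). intros x u p Uq. simpl.
    rewrite (dpart_ext_on U _ _ oU HL d x u p Uq), dpart_slice.
    apply (leibniz_sum_derive d x u p L Uq).
Qed.

Lemma continuous_leibniz_sum q L : U q -> continuous (unc (leibniz_sum F G L)) q.
Proof.
  destruct q as [[x u] p]. intros Uq. induction L as [|[a b] L IH].
  - apply continuous_const.
  - apply (continuous_plus
      (fun y => unc (iter_part a F) y * unc (iter_part b G) y)); [|exact IH].
    apply (continuous_mult (unc (iter_part a F)) (unc (iter_part b G))).
    + exact (proj1 (sF a x u p Uq)).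
    + exact (proj1 (sG b x u p Uq)).
Qed.

Lemma smooth_on_fmul : open U -> smooth_on U (fmul F G).
Proof.
  intros oU l x u p Uq. destruct (iter_part_fmul_leibniz oU l) as [L HL]. split.
  - apply (continuous_ext_loc _ (unc (leibniz_sum F G L))).
    + apply (filter_imp (fun q => U q)); [|exact (oU _ Uq)].
      intros [[x' u'] p'] Uq'. unfold unc. simpl. symmetry. apply HL, Uq'.
    + apply continuous_leibniz_sum, Uq.
  - intros d. apply (slice_derivable_ext_on U (leibniz_sum F G L)); try assumption.
    + intros x' u' p' Uq'. symmetry. apply HL, Uq'.
    + apply slice_derivableE, (leibniz_sum_derive d x u p L Uq).
Qed.

Lemma dpart_fmul d x u p : U (x, u, p) ->
  dpart d (fmul F G) x u p = dpart d F x u p * G x u p + F x u p * dpart d G x u p.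
Proof.
  intros Uq. rewrite !dpart_slice.
  replace (slice d (fmul F G) x u p) with
    (fun t => slice d F x u p t * slice d G x u p t) by now destruct d.
  rewrite Derive_mult.
  - now destruct d.
  - apply slice_derivableE, (proj2 (sF [] x u p Uq)).
  - apply slice_derivableE, (proj2 (sG [] x u p Uq)).
Qed.

End Leibniz.

Lemma app_fmul (U : pt -> Prop) V F G x u p :
  smooth_on U F -> smooth_on U G -> U (x, u, p) ->
  app V (fmul F G) x u p = app V F x u p * G x u p + F x u p * app V G x u p.
Proof.
  intros sF sG Uq. unfold app.
  generalize (dpart_fmul U F G sF sG Defs.Dx x u p Uq),
    (dpart_fmul U F G sF sG Defs.Du x u p Uq),
    (dpart_fmul U F G sF sG Defs.Dp x u p Uq).
  simpl. intros -> -> ->. ring.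
Qed.

Lemma app_ext_on (U : pt -> Prop) V F G x u p : open U ->
  (forall x u p, U (x, u, p) -> F x u p = G x u p) -> U (x, u, p) ->
  app V F x u p = app V G x u p.
Proof.
  intros oU eqFG Uq. unfold app.
  generalize (dpart_ext_on U F G oU eqFG Defs.Dx x u p Uq),
    (dpart_ext_on U F G oU eqFG Defs.Du x u p Uq),
    (dpart_ext_on U F G oU eqFG Defs.Dp x u p Uq).
  simpl. intros -> -> ->. reflexivity.
Qed.

Lemma app_cst V c x u p : app V (cst c) x u p = 0.
Proof. unfold app, dx, du, dp, cst. rewrite !Derive_const. ring. Qed.

Lemma app_coord_p V x u p : app V coord_p x u p = cp V x u p.
Proof. unfold app, dx, du, dp, coord_p. rewrite !Derive_const, Derive_id. ring. Qed.

Lemma app_vscale a V F x u p : app (vscale a V) F x u p = a x u p * app V F x u p.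
Proof. unfold app, vscale, fmul. simpl. ring. Qed.

Lemma app_Xvf l F x u p : app (Xvf l) F x u p = du F x u p + l x u p * dp F x u p.
Proof. unfold app, Xvf, cst. simpl. ring. Qed.

Lemma app_fmul_gauge (U : pt -> Prop) V f g l x u p :
  smooth_on U f -> smooth_on U g -> U (x, u, p) -> f x u p <> 0 ->
  app V g x u p = (l x u p - app V f x u p / f x u p) * g x u p ->
  app V (fmul f g) x u p = l x u p * fmul f g x u p.
Proof.
  intros sf sg Uq f_neq0 Vg. rewrite (app_fmul U), Vg by assumption.
  unfold fmul. field. exact f_neq0.
Qed.

Lemma app_fmul_kernel (U : pt -> Prop) V c f g r x u p :
  smooth_on U f -> smooth_on U g -> U (x, u, p) -> c x u p <> 0 -> f x u p <> 0 ->
  app V f x u p / f x u p = r -> app (vscale c V) g x u p = 0 ->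
  app V (fmul f g) x u p = r * fmul f g x u p.
Proof.
  intros sf sg Uq c_neq0 f_neq0 Vf Vg. rewrite app_vscale in Vg.
  destruct (Rmult_integral _ _ Vg) as [c0 | Vg0]; [contradiction|].
  rewrite (app_fmul U), Vg0, <- Vf by assumption. unfold fmul. field. exact f_neq0.
Qed.

Lemma prolong_du phi l : prolong phi (cst 0) (cst 1) l = Xvf l.
Proof.
  unfold prolong, Xvf. f_equal. do 3 (apply functional_extensionality; intro).
  unfold Apl, fsub, fadd, fmul. rewrite !app_cst. unfold cst. ring.
Qed.

Definition evol_prolong (phi h : fn) : VF := mkVF (cst 0) h (app (Avf phi) h).

Lemma prolong_evol phi h : prolong phi (cst 0) h (cst 0) = evol_prolong phi h.
Proof.
  unfold prolong, evol_prolong. f_equal. do 3 (apply functional_extensionality; intro).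
  unfold Apl, fsub, fadd, fmul. rewrite !app_cst. unfold cst. ring.
Qed.

Lemma gen_Cinf_sym_duE (U : pt -> Prop) phi l :
  gen_Cinf_sym U phi (cst 0) (cst 1) l -> forall x u p, U (x, u, p) ->
  app (Avf phi) l x u p + l x u p * l x u p = du phi x u p + l x u p * dp phi x u p.
Proof.
  intros [_ [_ [_ Hbr]]] x u p Uq. rewrite prolong_du in Hbr.
  destruct (Hbr x u p Uq) as [_ [_ Hcp]].
  unfold bracket, vsub, vscale, Apl, fsub, fadd, fmul in Hcp. simpl in Hcp.
  rewrite app_cst, app_Xvf in Hcp. change (cst 0 x u p) with 0 in Hcp. lra.
Qed.

Lemma app_evol_prolong phi l h F x u p :
  app (Avf phi) h x u p = l x u p * h x u p ->
  app (evol_prolong phi h) F x u p = h x u p * app (Xvf l) F x u p.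
Proof. intros Ah. unfold app, evol_prolong, Xvf, cst. simpl. rewrite Ah. ring. Qed.

Section EvolutionaryProlongation.
Variables (U : pt -> Prop) (phi l h : fn).
Hypotheses (oU : open U) (sh : smooth_on U h)
  (sym : gen_Cinf_sym U phi (cst 0) (cst 1) l)
  (Ah : forall x u p, U (x, u, p) -> app (Avf phi) h x u p = l x u p * h x u p).

Lemma bracket_evol_prolong_Avf :
  vf_eq_on U (bracket (evol_prolong phi h) (Avf phi)) (mkVF (cst 0) (cst 0) (cst 0)).
Proof.
  destruct sym as [_ [_ [sl _]]]. intros x u p Uq.
  unfold bracket, fsub. simpl. split; [|split].
  - rewrite !app_cst. unfold cst. ring.
  - rewrite app_coord_p. unfold cst. simpl. ring.
  - rewrite (app_ext_on U _ _ (fmul l h) x u p oU Ah Uq), (app_fmul U),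
      (app_evol_prolong phi l h _ x u p (Ah x u p Uq)), app_Xvf, Ah by assumption.
    rewrite <- (gen_Cinf_sym_duE U phi l sym x u p Uq). unfold cst. ring.
Qed.

Lemma gen_Cinf_sym_evol_prolong : gen_Cinf_sym U phi (cst 0) h (cst 0).
Proof.
  split; [apply smooth_on_cst|split; [exact sh|split; [apply smooth_on_cst|]]].
  rewrite prolong_evol. intros x u p Uq.
  destruct (bracket_evol_prolong_Avf x u p Uq) as [-> [-> ->]].
  unfold vsub, vscale, Apl, fsub, fadd, fmul. simpl. rewrite app_cst.
  unfold cst. repeat split; ring.
Qed.

Lemma gen_symmetry_evol_prolong : gen_symmetry U phi (evol_prolong phi h).
Proof.
  exists (cst 0), h. split; [exact gen_Cinf_sym_evol_prolong|].
  rewrite prolong_evol. intros x u p _. repeat split.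
Qed.

(* On [U] the prolongation of [h d_u] is [h X_l]. *)
Lemma A_equiv_evol_prolong : (exists q, U q) ->
  A_equiv U phi (cst 0) h (cst 0) (cst 0) (cst 1) l.
Proof.
  intros [[[x0 u0] p0] Uq0]. unfold A_equiv. rewrite prolong_evol, prolong_du.
  exists (cst 0), (cst 1), (fmul (cst (-1)) h).
  split; [apply smooth_on_cst|split; [apply smooth_on_cst|split]].
  - apply smooth_on_fmul; [apply smooth_on_cst|exact sh|exact oU].
  - split.
    + intros all0. destruct (all0 x0 u0 p0 Uq0) as [_ [one0 _]].
      exact (R1_neq_R0 one0).
    + intros x u p Uq. unfold vadd, vscale, evol_prolong, Avf, Xvf, fadd, fmul. simpl.
      rewrite Ah by exact Uq. unfold cst. repeat split; ring.
Qed.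

Lemma in_class_evol_prolong : (exists q, U q) ->
  in_class U phi (cst 0) h (cst 0) (cst 0) (cst 1) l.
Proof.
  intros ne. split; [exact gen_Cinf_sym_evol_prolong | exact (A_equiv_evol_prolong ne)].
Qed.

End EvolutionaryProlongation.

Lemma bracket_evol_prolong_pair (U : pt -> Prop) phi l1 l2 h1 h2 r : open U ->
  smooth_on U l1 -> smooth_on U l2 -> smooth_on U h1 -> smooth_on U h2 ->
  (forall x u p, U (x, u, p) -> app (Avf phi) h1 x u p = l1 x u p * h1 x u p) ->
  (forall x u p, U (x, u, p) -> app (Avf phi) h2 x u p = l2 x u p * h2 x u p) ->
  (forall x u p, U (x, u, p) ->
     app (Xvf l1) h2 x u p = r x u p * h2 x u p /\
     app (Xvf l2) h1 x u p = r x u p * h1 x u p /\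
     r x u p * (l1 x u p - l2 x u p) = app (Xvf l1) l2 x u p - app (Xvf l2) l1 x u p) ->
  vf_eq_on U (bracket (evol_prolong phi h1) (evol_prolong phi h2))
    (mkVF (cst 0) (cst 0) (cst 0)).
Proof.
  intros oU sl1 sl2 sh1 sh2 Ah1 Ah2 Hr x u p Uq.
  destruct (Hr x u p Uq) as [X1h2 [X2h1 Xl]].
  unfold bracket, fsub. simpl. split; [|split].
  - rewrite !app_cst. unfold cst. ring.
  - rewrite (app_evol_prolong phi l1 h1 _ x u p (Ah1 x u p Uq)),
      (app_evol_prolong phi l2 h2 _ x u p (Ah2 x u p Uq)), X1h2, X2h1.
    unfold cst. ring.
  - rewrite (app_ext_on U _ _ (fmul l2 h2) x u p oU Ah2 Uq),
      (app_ext_on U _ _ (fmul l1 h1) x u p oU Ah1 Uq),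
      (app_evol_prolong phi l1 h1 _ x u p (Ah1 x u p Uq)),
      (app_evol_prolong phi l2 h2 _ x u p (Ah2 x u p Uq)),
      !(app_fmul U), X1h2, X2h1 by assumption.
    replace (app (Xvf l1) l2 x u p)
      with (r x u p * (l1 x u p - l2 x u p) + app (Xvf l2) l1 x u p)
      by (rewrite Xl; ring).
    unfold cst. ring.
Qed.

Theorem theorem2 (U : pt -> Prop) (phi l1 l2 f1 f2 g1 g2 : fn) :
  open U -> (exists q, U q) ->
  smooth_on U phi ->
  (* (d_u, l1), (d_u, l2): canonical representatives of two non-equivalent
     generalized C^infinity-symmetries *)
  gen_Cinf_sym U phi (cst 0) (cst 1) l1 ->
  gen_Cinf_sym U phi (cst 0) (cst 1) l2 ->
  ~ A_equiv U phi (cst 0) (cst 1) l1 (cst 0) (cst 1) l2 ->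
  smooth_on U f1 -> smooth_on U f2 -> smooth_on U g1 -> smooth_on U g2 ->
  (forall x u p, U (x, u, p) ->
     l1 x u p - l2 x u p <> 0 /\ f1 x u p <> 0 /\ f2 x u p <> 0 /\
     g1 x u p <> 0 /\ g2 x u p <> 0) ->
  let rho := fdiv (fsub (app (Xvf l1) l2) (app (Xvf l2) l1)) (fsub l1 l2) in
  (forall x u p, U (x, u, p) ->
     app (Xvf l1) f2 x u p / f2 x u p = rho x u p /\
     app (Xvf l2) f1 x u p / f1 x u p = rho x u p) ->
  let Y1 := vscale f1 (Xvf l1) in
  let Y2 := vscale f2 (Xvf l2) in
  let rho1 := fsub l1 (fdiv (app (Avf phi) f1) f1) in
  let rho2 := fsub l2 (fdiv (app (Avf phi) f2) f2) in
  (forall x u p, U (x, u, p) ->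
     app (Avf phi) g1 x u p = rho1 x u p * g1 x u p /\
     app Y2 g1 x u p = 0 /\
     app (Avf phi) g2 x u p = rho2 x u p * g2 x u p /\
     app Y1 g2 x u p = 0) ->
  let h1 := fmul f1 g1 in
  let h2 := fmul f2 g2 in
  let Z1 := mkVF (cst 0) h1 (app (Avf phi) h1) in
  let Z2 := mkVF (cst 0) h2 (app (Avf phi) h2) in
  (* (1) *)
  (in_class U phi (cst 0) h1 (cst 0) (cst 0) (cst 1) l1 /\
   in_class U phi (cst 0) h2 (cst 0) (cst 0) (cst 1) l2) /\
  (* (2) *)
  (gen_symmetry U phi Z1 /\ gen_symmetry U phi Z2) /\
  (* (3) *)
  (vf_eq_on U (bracket Z1 (Avf phi)) (mkVF (cst 0) (cst 0) (cst 0)) /\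
   vf_eq_on U (bracket Z2 (Avf phi)) (mkVF (cst 0) (cst 0) (cst 0)) /\
   vf_eq_on U (bracket Z1 Z2) (mkVF (cst 0) (cst 0) (cst 0))).
Proof.
  intros oU ne sphi sym1 sym2 _ sf1 sf2 sg1 sg2 nz rho Hrho Y1 Y2 rho1 rho2 Hg
    h1 h2 Z1 Z2.
  pose proof sym1 as (_ & _ & sl1 & _). pose proof sym2 as (_ & _ & sl2 & _).
  assert (sh1 : smooth_on U h1) by (apply smooth_on_fmul; assumption).
  assert (sh2 : smooth_on U h2) by (apply smooth_on_fmul; assumption).
  assert (Ah1 : forall x u p, U (x, u, p) ->
            app (Avf phi) h1 x u p = l1 x u p * h1 x u p).
  { intros x u p Uq. destruct (nz x u p Uq) as (_ & nf1 & _).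
    apply (app_fmul_gauge U); try assumption. apply (Hg x u p Uq). }
  assert (Ah2 : forall x u p, U (x, u, p) ->
            app (Avf phi) h2 x u p = l2 x u p * h2 x u p).
  { intros x u p Uq. destruct (nz x u p Uq) as (_ & _ & nf2 & _).
    apply (app_fmul_gauge U); try assumption. apply (Hg x u p Uq). }
  split; [split|split; [split|split; [|split]]].
  - apply in_class_evol_prolong; assumption.
  - apply in_class_evol_prolong; assumption.
  - apply gen_symmetry_evol_prolong with l1; assumption.
  - apply gen_symmetry_evol_prolong with l2; assumption.
  - apply bracket_evol_prolong_Avf with l1; assumption.
  - apply bracket_evol_prolong_Avf with l2; assumption.
  - apply (bracket_evol_prolong_pair U phi l1 l2 h1 h2 rho); try assumption.
    intros x u p Uq. destruct (nz x u p Uq) as (nl & nf1 & nf2 & _).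
    destruct (Hrho x u p Uq) as [X1f2 X2f1]. destruct (Hg x u p Uq) as (_ & Y2g1 & _ & Y1g2).
    split; [|split].
    + apply (app_fmul_kernel U _ f1); assumption.
    + apply (app_fmul_kernel U _ f2); assumption.
    + unfold rho, fdiv, fsub. field. exact nl.
Qed.
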